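(* The algebra $(\mathcal{T}_\bullet,\overline{\ast})$ is a free associative algebra, freely generated by the set of non-empty reduced set compositions in $\mathsf{Comp}=\bigcup_{n\ge0}\mathsf{Comp}_n$.
   Context: $[n]=\{1,\ldots,n\}$. A set composition of $[n]$ is a tuple $(P_1,\ldots,P_k)$ of pairwise disjoint non-empty subsets with union $[n]$; $\mathsf{Comp}_n$ is the set of them ($\mathsf{Comp}_0$ consists of the empty tuple). $\mathcal{T}_n$ is the free $\mathbb{Z}$-module on $\mathsf{Comp}_n$ and $\mathcal{T}_\bullet=\bigoplus_{n\ge0}\mathcal{T}_n$. The restricted product is defined bilinearly by $(P_1,\ldots,P_k)\,\overline{\ast}\,(Q_1,\ldots,Q_l)=(P_1,\ldots,P_k,p+Q_1,\ldots,p+Q_l)$ for $(P_1,\ldots,P_k)\in\mathsf{Comp}_p$, $(Q_1,\ldots,Q_l)\in\mathsf{Comp}_q$, where $p+X=\{p+x:x\in X\}$; its unit is the empty tuple. A set composition $(P_1,\ldots,P_k)\in\mathsf{Comp}_n$ is reduced if there is no pair $(a,m)$ with $1\le a<k$ and $m<n$ such that $P_1\cup\cdots\cup P_a=[m]$. *)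

From HB Require Import structures.
From mathcomp Require Import all_boot all_order all_algebra.
From mathcomp Require Import finmap.
From mathcomp Require Import freeg.
Set Implicit Arguments. Unset Strict Implicit. Unset Printing Implicit Defensive.
Import Order.TTheory GRing.Theory Num.Theory.
Local Open Scope ring_scope.
Local Open Scope fset_scope.

Definition rawcomp := (nat * seq {fset nat})%type.

Definition fset_upto (n : nat) : {fset nat} := [fset i | i in iota 1 n].

Definition is_setcomp (c : rawcomp) : bool :=
  [&& all (fun P : {fset nat} => P != fset0) c.2,
      pairwise (fun P Q : {fset nat} => [disjoint P & Q]) c.2
    & (\bigcup_(P <- c.2) P) == fset_upto c.1].

(* Comp = union over n of Comp_n; an element records its n. *)
Definition Comp := {c : rawcomp | is_setcomp c}.

Definition comp_n (c : Comp) : nat := (val c).1.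
Definition comp_blocks (c : Comp) : seq {fset nat} := (val c).2.

Lemma is_setcomp_empty : is_setcomp (0%N, [::]).
Proof.
rewrite /is_setcomp /= big_nil; apply/eqP/fsetP => x.
by rewrite /fset_upto /= !inE.
Qed.
Definition comp_empty : Comp := exist _ (0%N, [::]) is_setcomp_empty.

Definition shift_fset (p : nat) (X : {fset nat}) : {fset nat} :=
  [fset (p + x)%N | x in X].

Definition rawcomp_mul (c d : rawcomp) : rawcomp :=
  ((c.1 + d.1)%N, c.2 ++ map (shift_fset c.1) d.2).

(* On Comp (the raw product of two set compositions is a set composition,
   so [insubd] never uses its default). *)
Definition comp_mul (c d : Comp) : Comp :=
  insubd comp_empty (rawcomp_mul (val c) (val d)).

Definition comp_nonempty (c : Comp) : bool := (0 < size (comp_blocks c))%N.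

Definition comp_reduced (c : Comp) : bool :=
  ~~ [exists a : 'I_(size (comp_blocks c)), exists m : 'I_(comp_n c),
        (0 < a)%N && ((\bigcup_(P <- take a (comp_blocks c)) P)
                        == fset_upto m)].

Definition T := {freeg Comp / int}.

Definition T_basis (c : Comp) : T := << c >>.

Definition T_mul (x y : T) : T :=
  fglift (fun a : Comp => fglift (fun b : Comp => T_basis (comp_mul a b)) y) x.

Definition T_one : T := T_basis comp_empty.

Definition monomial (A : Type) (I : Type) (mul : A -> A -> A) (one : A)
  (gen : I -> A) (w : seq I) : A :=
  foldr (fun i acc => mul (gen i) acc) one w.

(* (A, mul, one) is a (unital) associative Z-algebra which is free
   associative, freely generated by the family gen restricted to S:
   the noncommutative monomials in the generators from S form a Z-basis
   of A (spanning + linear independence). *)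
Definition free_assoc_algebra (A : lmodType int) (mul : A -> A -> A) (one : A)
  (I : choiceType) (gen : I -> A) (S : pred I) : Prop :=
  [/\
      [/\ associative mul, left_id one mul & right_id one mul],
      (forall (c : int) (x y z : A), (mul (c *: x + y) z = c *: mul x z + mul y z)%R),
      (forall (c : int) (x y z : A), (mul z (c *: x + y) = c *: mul z x + mul z y)%R),
      (forall x : A, exists l : {freeg (seq I) / int},
          all (all S) (dom l) /\ x = fglift (monomial mul one gen) l)
    &
      (forall l : {freeg (seq I) / int},
          all (all S) (dom l) -> fglift (monomial mul one gen) l = 0%R -> l = 0%R)].

From HB Require Import structures.
From mathcomp Require Import all_boot all_order all_algebra.
From mathcomp Require Import finmap.
From mathcomp Require Import freeg.
From mathcomp Require Import zify.
Set Implicit Arguments. Unset Strict Implicit. Unset Printing Implicit Defensive.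
Import GRing.Theory.

(* T is the monoid algebra over Z of the monoid (Comp, comp_mul), and the
   monoid algebra of a free monoid is free associative on the free generators
   of the monoid, since words in them are mapped bijectively onto the basis.
   So it suffices that Comp is free on its non-empty reduced elements.
   Factorisations exist: if the first k blocks of a composition cover [m],
   it is the product of these k blocks and the other blocks shifted down by m.
   They are unique: comp_mul is left cancellative, and if a x = b y with a, b
   non-empty reduced and a composition of [p] with fewer blocks than b, then
   the first blocks of b are those of a, so they cover [p], and p is smaller
   than the size of b; hence b is not reduced. *)

Section FreegLift.
Local Open Scope ring_scope.
Variable K : choiceType.
Implicit Types (M : lmodType int) (x : {freeg K / int}).

HB.instance Definition _ M (f : K -> M) :=
  GRing.isZmodMorphism.Build {freeg K / int} M (fglift f) (lift_is_additive f).

Lemma fglift_is_scalable M (f : K -> M) : scalable (fglift f).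
Proof. by move=> c x; rewrite -[c]intz !scaler_int raddfMz. Qed.

HB.instance Definition _ M (f : K -> M) :=
  GRing.isScalable.Build int {freeg K / int} M *:%R (fglift f) (fglift_is_scalable f).

Lemma fgliftU M (f : K -> M) a : fglift f << a >> = f a.
Proof. by rewrite liftU scale1r. Qed.

Lemma freegU_scale (k : int) (a : K) : << k *g a >> = k *: << a >> :> {freeg K / int}.
Proof. by apply/eqP/freeg_eqP => b; rewrite coeffZ !coeffU mul1r. Qed.

Lemma linear_fun0 M (G : {freeg K / int} -> M) : linear G -> G 0 = 0.
Proof.
move=> linG; have := linG 1 0 0; rewrite scaler0 scale1r addr0.
by rewrite -{1}[G 0]addr0 => /addrI ->.
Qed.

Lemma freeg_linear_ext M (G H : {freeg K / int} -> M) :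
  linear G -> linear H -> (forall a, G << a >> = H << a >>) -> G =1 H.
Proof.
move=> linG linH eqGH; elim/freeg_ind_dom0 => [|k a x _ _ IHx].
  by rewrite !linear_fun0.
by rewrite freegU_scale linG linH IHx eqGH.
Qed.

Lemma eq_fglift M (f g : K -> M) : f =1 g -> fglift f =1 fglift g.
Proof.
by move=> efg; apply: freeg_linear_ext => [||a]; rewrite ?fgliftU ?efg //; exact: linearP.
Qed.

Lemma fglift_sumE M (f : K -> M) x :
  fglift f x = \sum_(a <- dom x) coeff a x *: f a.
Proof.
rewrite -{1}[x]freeg_sumE raddf_sum; apply: eq_bigr => a _.
exact: liftU.
Qed.

Lemma eq_in_fglift M (f g : K -> M) x : {in dom x, f =1 g} -> fglift f x = fglift g x.
Proof.
by move=> efg; rewrite !fglift_sumE big_seq [RHS]big_seq; apply: eq_bigr => a /efg ->.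
Qed.

Lemma fglift_id : fglift (fun a => << a >>) =1 id :> ({freeg K / int} -> {freeg K / int}).
Proof. by apply: freeg_linear_ext => [||a]; rewrite ?fgliftU //; exact: linearP. Qed.

Lemma dom_fglift_subset (K' : choiceType) (g : K -> K') x :
  {subset dom (fglift (fun a => << g a >>) x) <= map g (dom x)}.
Proof.
move=> b; rewrite fglift_sumE => /dom_sum_subset /flattenP[_ /mapP[a ax ->]].
rewrite filter_predT in ax.
by move/domZ_subset; rewrite domU1 mem_seq1 => /eqP ->; apply: map_f.
Qed.
End FreegLift.

Lemma fglift_comp (K K' : choiceType) (M : lmodType int) (g : K -> {freeg K' / int})
  (f : K' -> M) x :
  fglift f (fglift g x) = fglift (fun a => fglift f (g a)) x.
Proof.
apply: (freeg_linear_ext (G := fun x => fglift f (fglift g x))) => [c y z|c y z|a].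
- by rewrite !linearP.
- exact: linearP.
- by rewrite !fgliftU.
Qed.

Section MonoidAlgebra.
Local Open Scope ring_scope.
Variables (K : choiceType) (op : K -> K -> K) (e : K).
Hypotheses (opA : associative op) (op1x : left_id e op) (opx1 : right_id e op).

Definition freeg_mul (x y : {freeg K / int}) : {freeg K / int} :=
  fglift (fun a => fglift (fun b => << op a b >>) y) x.

Lemma freeg_mulU a b : freeg_mul << a >> << b >> = << op a b >>.
Proof. by rewrite /freeg_mul !fgliftU. Qed.

Lemma freeg_mul_linearl z : linear (freeg_mul^~ z).
Proof. exact: linearP. Qed.

Lemma freeg_mul_linearr z : linear (freeg_mul z).
Proof.
move=> c x y; move: z.
apply: (freeg_linear_ext (G := freeg_mul^~ _)
  (H := fun z => c *: freeg_mul z x + freeg_mul z y)) => [||a].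
- exact: freeg_mul_linearl.
- move=> d u v; rewrite !freeg_mul_linearl scalerDr scalerA mulrC -scalerA.
  by rewrite addrACA -scalerDr.
- by rewrite /freeg_mul !fgliftU linearP.
Qed.

Lemma freeg_mulA : associative freeg_mul.
Proof.
move=> x y z; move: x.
apply: (freeg_linear_ext (G := freeg_mul^~ _) (H := fun x => freeg_mul (freeg_mul x y) z))
  => [||a]; first exact: freeg_mul_linearl.
  by move=> c u v; rewrite !freeg_mul_linearl.
move: y; apply: (freeg_linear_ext (G := fun y => freeg_mul << a >> (freeg_mul y z))
  (H := fun y => freeg_mul (freeg_mul << a >> y) z)) => [c u v|c u v|b].
- by rewrite freeg_mul_linearl freeg_mul_linearr.
- by rewrite freeg_mul_linearr freeg_mul_linearl.
move: z; apply: (freeg_linear_ext (G := fun z => freeg_mul << a >> (freeg_mul << b >> z))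
  (H := freeg_mul (freeg_mul << a >> << b >>))) => [c u v|c u v|d].
- by rewrite !freeg_mul_linearr.
- exact: freeg_mul_linearr.
by rewrite !freeg_mulU opA.
Qed.

Lemma freeg_mul1l : left_id << e >> freeg_mul.
Proof.
apply: (freeg_linear_ext (G := freeg_mul << e >>) (H := id)) => [||a] //.
- exact: freeg_mul_linearr.
- by rewrite freeg_mulU op1x.
Qed.

Lemma freeg_mul1r : right_id << e >> freeg_mul.
Proof.
apply: (freeg_linear_ext (G := freeg_mul^~ << e >>) (H := id)) => [||a] //.
- exact: freeg_mul_linearl.
- by rewrite freeg_mulU opx1.
Qed.

Definition prod_word (w : seq K) : K := foldr op e w.

Lemma prod_word_cat v w : prod_word (v ++ w) = op (prod_word v) (prod_word w).
Proof. by elim: v => [|a v IHv] /=; rewrite ?op1x // IHv opA. Qed.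

Lemma monomialE w :
  monomial freeg_mul << e >> (fun a => << a >>) w = << prod_word w >>.
Proof. by elim: w => [|a w IHw] //=; rewrite IHw freeg_mulU. Qed.

Theorem free_assoc_monoid_algebra (S : pred K) :
    (forall c, exists w, all S w && (prod_word w == c)) ->
    {in [pred w | all S w] &, injective prod_word} ->
  free_assoc_algebra freeg_mul << e >> (fun a => << a >>) S.
Proof.
move=> factor_ex prod_word_inj.
pose factor c := xchoose (factor_ex c).
have factorP c : all S (factor c) && (prod_word (factor c) == c) := xchooseP (factor_ex c).
have prod_wordK w : all S w -> factor (prod_word w) = w.
  by move=> Sw; case/andP: (factorP (prod_word w)) => Sf /eqP; apply: prod_word_inj.
pose expand : {freeg K / int} -> {freeg (seq K) / int} := fglift (fun c => << factor c >>).
pose eval : {freeg (seq K) / int} -> {freeg K / int} := fglift (fun w => << prod_word w >>).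
have evalK x : eval (expand x) = x.
  rewrite /eval /expand fglift_comp -[RHS]fglift_id; apply: eq_fglift => c.
  by rewrite fgliftU; case/andP: (factorP c) => _ /eqP ->.
have expandK l : all (all S) (dom l) -> expand (eval l) = l.
  move=> Sl; rewrite /eval /expand fglift_comp -[RHS]fglift_id; apply: eq_in_fglift => w wl.
  by rewrite fgliftU prod_wordK //; apply: (allP Sl).
have eval_monomial l : fglift (monomial freeg_mul << e >> (fun a => << a >>)) l = eval l.
  by apply: eq_fglift => w; rewrite monomialE.
split.
- by split; [exact: freeg_mulA | exact: freeg_mul1l | exact: freeg_mul1r].
- by move=> c x y z; apply: freeg_mul_linearl.
- by move=> c x y z; apply: freeg_mul_linearr.
- move=> x; exists (expand x); split; last by rewrite eval_monomial evalK.
  apply/allP => w /dom_fglift_subset /mapP[c _ ->].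
  by case/andP: (factorP c).
- move=> l Sl; rewrite eval_monomial => eval0.
  by rewrite -(expandK l Sl) eval0 /expand linear0.
Qed.
End MonoidAlgebra.

Section SetCompositions.
Local Open Scope fset_scope.
Implicit Types (n m p q k : nat) (X P Q : {fset nat}) (s t : seq {fset nat}).

Lemma mem_fset_upto n x : (x \in fset_upto n) = (0 < x <= n)%N.
Proof.
apply/imfsetP/idP => [[y /= + ->]|xn]; first by rewrite mem_iota; lia.
by exists x; rewrite //= mem_iota; lia.
Qed.

Lemma fset_upto_inj : injective fset_upto.
Proof.
move=> n m /fsetP eq_nm; have := eq_nm n; have := eq_nm m.
rewrite !mem_fset_upto; lia.
Qed.

Lemma mem_shift_fset p X x : (x \in shift_fset p X) = (p <= x)%N && (x - p \in X).
Proof.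
apply/imfsetP/idP => [[y /= yX ->]|/andP[px xX]]; first by rewrite leq_addr addKn.
by exists (x - p); rewrite ?subnKC.
Qed.

Lemma shift_fset0 X : shift_fset 0 X = X.
Proof. by apply/fsetP => x; rewrite mem_shift_fset subn0. Qed.

Lemma shift_fsetD p q X : shift_fset p (shift_fset q X) = shift_fset (p + q) X.
Proof.
apply/fsetP => x; rewrite !mem_shift_fset subnDA andbA.
by congr (_ && _); apply/idP/idP; lia.
Qed.

Lemma shift_fset_inj p : injective (shift_fset p).
Proof.
move=> X Y /fsetP eqXY; apply/fsetP => x.
by have := eqXY (p + x)%N; rewrite !mem_shift_fset leq_addr addKn.
Qed.

Lemma shift_fset_eq0 p X : (shift_fset p X == fset0) = (X == fset0).
Proof.
have shift0 : shift_fset p fset0 = fset0.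
  by apply/fsetP => x; rewrite mem_shift_fset inE andbF.
by rewrite -{1}shift0 (inj_eq (@shift_fset_inj p)).
Qed.

Lemma mem_bigfcup_seq x s : (x \in \bigcup_(P <- s) P) = has (fun P => x \in P) s.
Proof. by elim: s => [|P s IHs]; rewrite ?big_nil ?big_cons ?inE ?IHs. Qed.

Lemma setcompP (c : rawcomp) :
  reflect [/\ all (fun P => P != fset0) c.2,
              pairwise (fun P Q => [disjoint P & Q]) c.2
            & forall x, has (fun P => x \in P) c.2 = (0 < x <= c.1)%N]
          (is_setcomp c).
Proof.
apply: (iffP and3P) => -[nonempty disj cover]; split => //.
  by move=> x; rewrite -mem_bigfcup_seq (eqP cover) mem_fset_upto.
by apply/eqP/fsetP => x; rewrite mem_bigfcup_seq mem_fset_upto cover.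
Qed.

Lemma setcomp_cover (c : rawcomp) : is_setcomp c -> \bigcup_(P <- c.2) P = fset_upto c.1.
Proof. by case/and3P => _ _ /eqP. Qed.

Lemma setcomp_eq (c d : rawcomp) : is_setcomp c -> is_setcomp d -> c.2 = d.2 -> c = d.
Proof.
case: c d => [n s] [m t] /setcomp_cover /= cover_n /setcomp_cover /= + eq_st.
by rewrite -eq_st cover_n => /fset_upto_inj ->; rewrite eq_st.
Qed.

Lemma setcomp_block_bound (c : rawcomp) P x :
  is_setcomp c -> P \in c.2 -> x \in P -> (0 < x <= c.1)%N.
Proof. by case/setcompP => _ _ <- Pc xP; apply/hasP; exists P. Qed.

Lemma setcomp_take_drop_disjoint (c : rawcomp) k P Q x :
  is_setcomp c -> P \in take k c.2 -> Q \in drop k c.2 -> x \in P -> x \notin Q.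
Proof.
case/setcompP => _ + _ Pk Qk; rewrite -(cat_take_drop k c.2) pairwise_cat.
by case/and3P => /allrelP disj _ _; have /fdisjointP := disj P Q Pk Qk; apply.
Qed.

Lemma setcomp_mul c d : is_setcomp c -> is_setcomp d -> is_setcomp (rawcomp_mul c d).
Proof.
case: c d => p s [q t] cs dt.
have s_bound := setcomp_block_bound cs; have t_bound := setcomp_block_bound dt.
case/setcompP: cs => /= s_nonempty s_disj s_cover.
case/setcompP: dt => /= t_nonempty t_disj t_cover.
apply/setcompP; split => /=.
- rewrite all_cat all_map s_nonempty.
  by apply: sub_all t_nonempty => Q /=; rewrite shift_fset_eq0.
- rewrite pairwise_cat pairwise_map s_disj; apply/and3P; split.
  + apply/allrelP => P _ Ps /mapP[Q Qt ->]; apply/fdisjointP => x xP.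
    have /= := s_bound _ _ Ps xP; rewrite mem_shift_fset.
    by apply: contraTN => /andP[_ /(t_bound _ _ Qt)]; lia.
  + done.
  + apply: sub_pairwise t_disj => P Q /fdisjointP disjPQ; apply/fdisjointP => x.
    by rewrite !mem_shift_fset => /andP[-> /disjPQ].
- have shifted_cover y : has (fun Q => y \in shift_fset p Q) t = (p < y <= p + q)%N.
    case: (leqP p y) => py.
      rewrite (eq_has (a2 := fun Q => (y - p)%N \in Q)) ?t_cover; first lia.
      by move=> Q; rewrite mem_shift_fset py.
    rewrite (eq_has (a2 := pred0)) ?has_pred0; first lia.
    by move=> Q; rewrite mem_shift_fset leqNgt py.
  by move=> x; rewrite has_cat has_map s_cover shifted_cover; lia.
Qed.

Lemma val_comp_mul a b : val (comp_mul a b) = rawcomp_mul (val a) (val b).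
Proof. by rewrite /comp_mul insubdK //; apply: setcomp_mul; apply: valP. Qed.

Lemma comp_blocks_mul a b :
  comp_blocks (comp_mul a b) = comp_blocks a ++ map (shift_fset (comp_n a)) (comp_blocks b).
Proof. by rewrite /comp_blocks val_comp_mul. Qed.

Lemma comp_blocks_inj : injective comp_blocks.
Proof. by move=> a b eq_ab; apply/val_inj/setcomp_eq => //; apply: valP. Qed.

Lemma comp_mulA : associative comp_mul.
Proof.
move=> a b c; apply: val_inj; rewrite !val_comp_mul /rawcomp_mul /= addnA.
rewrite map_cat catA -map_comp; congr (_, _ ++ _); apply: eq_map => X /=.
by rewrite shift_fsetD.
Qed.

Lemma comp_mul1l : left_id comp_empty comp_mul.
Proof.
by move=> a; apply: comp_blocks_inj; rewrite comp_blocks_mul (eq_map shift_fset0) map_id.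
Qed.

Lemma comp_mul1r : right_id comp_empty comp_mul.
Proof. by move=> a; apply: comp_blocks_inj; rewrite comp_blocks_mul cats0. Qed.

Lemma comp_mulI a : injective (comp_mul a).
Proof.
move=> x y /(congr1 comp_blocks); rewrite !comp_blocks_mul.
move/(congr1 (drop (size (comp_blocks a)))); rewrite !drop_size_cat //.
by move/(inj_map (@shift_fset_inj _)); apply: comp_blocks_inj.
Qed.

Lemma setcomp_drop_gt (c : rawcomp) k m Q x : is_setcomp c ->
  \bigcup_(P <- take k c.2) P = fset_upto m -> Q \in drop k c.2 -> x \in Q -> (m < x)%N.
Proof.
move=> cs cover_m Qk xQ; rewrite ltnNge; apply/negP => xm.
have /andP[x0 _] := setcomp_block_bound cs (mem_drop Qk) xQ.
have : x \in fset_upto m by rewrite mem_fset_upto x0 xm.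
rewrite -cover_m mem_bigfcup_seq => /hasP[P Pk xP].
by have := setcomp_take_drop_disjoint cs Pk Qk xP; rewrite xQ.
Qed.

Lemma setcomp_prefix_lt (c : rawcomp) k m : is_setcomp c -> (k < size c.2)%N ->
  \bigcup_(P <- take k c.2) P = fset_upto m -> (m < c.1)%N.
Proof.
move=> cs kc cover_m; pose Q := nth fset0 c.2 k.
have Qc : Q \in c.2 := mem_nth _ kc.
have Qk : Q \in drop k c.2 by rewrite (drop_nth fset0 kc) mem_head.
have /fset0Pn[x xQ] : Q != fset0 by case/setcompP: cs => /allP/(_ Q Qc).
have /andP[_ xn] := setcomp_block_bound cs Qc xQ.
exact: leq_trans (setcomp_drop_gt cs cover_m Qk xQ) xn.
Qed.

Lemma comp_reducedPn c :
  reflect (exists k m, [/\ (0 < k < size (comp_blocks c))%N, (m < comp_n c)%N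
                         & \bigcup_(P <- take k (comp_blocks c)) P = fset_upto m])
          (~~ comp_reduced c).
Proof.
rewrite negbK; apply: (iffP existsP) => [[k /existsP[m /andP[k0 /eqP cover]]]|].
  by exists k, m; rewrite k0 ltn_ord.
case=> k [m [/andP[k0 kc] mc cover]]; exists (Ordinal kc); apply/existsP.
by exists (Ordinal mc); rewrite /= k0 cover eqxx.
Qed.

Definition comp_atom (c : Comp) : bool := comp_nonempty c && comp_reduced c.

Lemma comp_atom_mul_eq a b x y :
  comp_atom a -> comp_atom b -> comp_mul a x = comp_mul b y -> a = b.
Proof.
wlog ab : a b x y / (size (comp_blocks a) <= size (comp_blocks b))%N.
  move=> wlog_ab Aa Ab eq_ab.
  case: (leqP (size (comp_blocks a)) (size (comp_blocks b))) => ab.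
    exact: wlog_ab ab Aa Ab eq_ab.
  exact/esym/(wlog_ab b a y x (ltnW ab) Ab Aa (esym eq_ab)).
case/andP => a_nonempty _ /andP[_ b_reduced].
move/(congr1 (fun c => take (size (comp_blocks a)) (comp_blocks c))).
rewrite !comp_blocks_mul take_size_cat // takel_cat // => eq_take.
have cover_a := setcomp_cover (valP a); rewrite -/(comp_blocks a) eq_take in cover_a.
case: (ltngtP (size (comp_blocks a)) (size (comp_blocks b))) ab => // [ab _|eq_size _].
  case/comp_reducedPn: b_reduced; exists (size (comp_blocks a)), (comp_n a).
  by split=> //; [apply/andP | apply: setcomp_prefix_lt (valP b) ab cover_a].
by apply: comp_blocks_inj; rewrite eq_take eq_size take_size.
Qed.

Lemma comp_mul_neq_empty a x : comp_nonempty a -> comp_mul a x != comp_empty.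
Proof.
move=> a_nonempty; apply/eqP => /(congr1 (fun c => size (comp_blocks c))).
rewrite comp_blocks_mul size_cat -[size (comp_blocks comp_empty)]/0%N.
by move: a_nonempty; rewrite /comp_nonempty; lia.
Qed.

Lemma comp_prod_word_inj :
  {in [pred w | all comp_atom w] &, injective (prod_word comp_mul comp_empty)}.
Proof.
elim=> [|a v IHv] [|b w] //=.
- by move=> _ /andP[/andP[Ab _] _] /esym/eqP; rewrite (negPf (comp_mul_neq_empty _ Ab)).
- by move=> /andP[/andP[Aa _] _] _ /eqP; rewrite (negPf (comp_mul_neq_empty _ Aa)).
move=> /andP[Aa Av] /andP[Ab Aw] eq_ab.
have eq_a := comp_atom_mul_eq Aa Ab eq_ab; subst b.
by rewrite (IHv w Av Aw (comp_mulI eq_ab)).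
Qed.

Definition unshift_fset m X : {fset nat} := [fset (x - m)%N | x in X].

Lemma mem_unshift_fset m X z : {in X, forall x, m < x}%N ->
  (z \in unshift_fset m X) = (0 < z)%N && ((z + m)%N \in X).
Proof.
move=> X_gt; apply/imfsetP/idP => [[x /= xX ->]|/andP[z0 zX]].
  by have mx := X_gt x xX; rewrite subnK ?xX ?andbT ?subn_gt0 // ltnW.
by exists (z + m)%N; rewrite ?addnK.
Qed.

Lemma unshift_fsetK m X : {in X, forall x, m < x}%N -> shift_fset m (unshift_fset m X) = X.
Proof.
move=> X_gt; apply/fsetP => x; rewrite mem_shift_fset mem_unshift_fset //.
case: (boolP (x \in X)) => [xX|xNX].
  by have mx := X_gt x xX; rewrite subnK ?xX ?andbT ?subn_gt0 ?mx // ltnW.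
by case: (leqP m x) => //= mx; rewrite subnK // (negPf xNX) andbF.
Qed.

Section PrefixCut.
Variables (c : rawcomp) (k m : nat).
Hypotheses (cs : is_setcomp c) (cover_m : \bigcup_(P <- take k c.2) P = fset_upto m).

Let drop_gt Q : Q \in drop k c.2 -> {in Q, forall x, m < x}%N.
Proof. by move=> Qk x; apply: setcomp_drop_gt cs cover_m Qk. Qed.

Lemma setcomp_take : is_setcomp (m, take k c.2).
Proof.
case/setcompP: cs; rewrite -{1 2}(cat_take_drop k c.2) all_cat pairwise_cat.
by case/andP=> nonempty _ /and3P[_ disj _] _; apply/and3P; rewrite cover_m.
Qed.

Lemma setcomp_unshift_drop : is_setcomp (c.1 - m, map (unshift_fset m) (drop k c.2)).
Proof.
case/setcompP: cs; rewrite -{1 2}(cat_take_drop k c.2) all_cat pairwise_cat.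
move=> /andP[_ nonempty] /and3P[_ _ disj] cover; apply/setcompP; split => /=.
- rewrite all_map; apply/allP => Q Qk /=; have /fset0Pn[x xQ] := allP nonempty Q Qk.
  have mx := drop_gt Qk xQ; apply/fset0Pn; exists (x - m)%N.
  by rewrite (mem_unshift_fset _ (drop_gt Qk)) subn_gt0 mx subnK // ltnW.
- rewrite pairwise_map.
  apply: (@sub_in_pairwise _ (mem (drop k c.2))) disj; last by apply/allP.
  move=> P Q Pk Qk /fdisjointP disjPQ; apply/fdisjointP => z.
  rewrite (mem_unshift_fset _ (drop_gt Pk)) (mem_unshift_fset _ (drop_gt Qk)).
  by case/andP => -> /disjPQ.
- move=> z; rewrite has_map.
  rewrite (eq_in_has (a2 := fun Q => (0 < z)%N && ((z + m)%N \in Q))); last first.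
    by move=> Q Qk /=; rewrite (mem_unshift_fset _ (drop_gt Qk)).
  case: (posnP z) => [->|z0]; first by apply/negbTE/hasPn.
  have := cover (z + m)%N; rewrite -{1}(cat_take_drop k c.2) has_cat -mem_bigfcup_seq.
  by rewrite cover_m mem_fset_upto /=; lia.
Qed.

Lemma rawcomp_mul_split : (m <= c.1)%N ->
  rawcomp_mul (m, take k c.2) (c.1 - m, map (unshift_fset m) (drop k c.2)) = c.
Proof.
move=> mc; rewrite /rawcomp_mul /= subnKC // -map_comp.
have -> : map (shift_fset m \o unshift_fset m) (drop k c.2) = drop k c.2.
  by rewrite -[RHS]map_id; apply/eq_in_map => Q Qk; apply: unshift_fsetK (drop_gt Qk).
by rewrite cat_take_drop; case: (c).
Qed.
End PrefixCut.

Lemma comp_split c : ~~ comp_reduced c -> exists a b,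
  [/\ c = comp_mul a b, (size (comp_blocks a) < size (comp_blocks c))%N
    & (size (comp_blocks b) < size (comp_blocks c))%N].
Proof.
case/comp_reducedPn => k [m [/andP[k0 kc] mc cover_m]].
have cs := valP c.
exists (Sub _ (setcomp_take cs cover_m)), (Sub _ (setcomp_unshift_drop cs cover_m)).
split.
- by apply: val_inj; rewrite val_comp_mul rawcomp_mul_split // ltnW.
- by rewrite /comp_blocks /= size_take kc.
- by move: k0 kc; rewrite /comp_blocks /= size_map size_drop; lia.
Qed.

Lemma comp_factor_exists c :
  exists w, all comp_atom w && (prod_word comp_mul comp_empty w == c).
Proof.
have [n] := ubnP (size (comp_blocks c)); elim: n c => // n IHn c cn.
case: (posnP (size (comp_blocks c))) => [/size0nil c_empty|c_nonempty].
  by exists [::]; apply/eqP/comp_blocks_inj; rewrite c_empty.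
case: (boolP (comp_reduced c)) => [c_reduced|/comp_split[a [b [c_ab ac bc]]]].
  exists [:: c]; rewrite /= /comp_atom /comp_nonempty c_nonempty c_reduced.
  by rewrite comp_mul1r eqxx.
have [v /andP[Av /eqP eq_v]] := IHn a (leq_trans ac cn).
have [w /andP[Aw /eqP eq_w]] := IHn b (leq_trans bc cn).
exists (v ++ w); rewrite all_cat Av Aw /=.
by rewrite (prod_word_cat comp_mulA comp_mul1l) eq_v eq_w c_ab.
Qed.
End SetCompositions.

Theorem proposition3p1 :
  free_assoc_algebra T_mul T_one T_basis
    (fun c : Comp => comp_nonempty c && comp_reduced c).
Proof.
(* [T_mul], [T_one] and [T_basis] unfold to [freeg_mul comp_mul],
   [<< comp_empty >>] and [<< _ >>]. *)
exact (free_assoc_monoid_algebra comp_mulA comp_mul1l comp_mul1r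
  comp_factor_exists comp_prod_word_inj).
Qed.
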